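(* For all formulas $q_1,\dots,q_n,q\in F(V)$: if $q_1,\dots,q_n\vdash_{\mathrm{sq}\L^*}q$, then $q_1,\dots,q_n\vDash_{\mathbb{SQW^*}}q$.
   Context: Let $V$ be a set of propositional variables and $F(V)$ the set of formulas built from $V$ and the constant $1$ using $\to$ and $\neg$. Abbreviations: $p^+:=(p\to 1)\to 1$, $p^-:=(p\to\neg 1)\to\neg 1$ (binding more tightly than $\neg$), $p\vee q:=((p^+\to q^+)^+\to(\neg p)^-)\to((q^-\to p^-)^-\to p^-)$; an axiom ''$p\leftrightarrow q$'' stands for the two axioms $p\to q$ and $q\to p$. The logic $\mathrm{sq}\L^*$ has axiom schemas (for all $p,q,r\in F(V)$): (Q1) $(p\to q)\leftrightarrow(\neg q\to\neg p)$; (Q2) $1\leftrightarrow((1\to p)\to 1)$; (Q3) $p\leftrightarrow((q\to q)\to p)$; (Q4) $(p\to q)\leftrightarrow((q^+\to p^-)\to(p^+\to q^-))$; (Q5) $\neg(p\to q)\leftrightarrow(q\to p)$; (Q6) $(p\to(\neg p\to q))^+\leftrightarrow(p^+\to(\neg p^+\to q^+))$; (Q7) $(p\to(q\vee r))\leftrightarrow((p\to r)\vee(p\to q))$; (Q8) $(p\vee(q\vee r))\leftrightarrow((p\vee q)\vee r)$; (Q9) $((p\to 1)\to((q\to 1)\to r))\to((q\to 1)\to((p\to 1)\to r))$; (Q10) $p\to 1$; and rules: (qMP) from $(r\to r)\to p$ and $(r\to r)\to(p\to q)$ infer $(r\to r)\to q$; (Reg) from $p$ infer $(r\to r)\to p$;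 (AReg1) from $(r\to r)\to(p\to q)$ infer $p\to q$; (AReg2) from $(r\to r)\to\neg(p\to q)$ infer $\neg(p\to q)$; (AReg3) from $(r\to r)\to\neg 1$ infer $\neg 1$; (AReg4) from $(r\to r)\to 1$ infer $1$; (Inv1) from $p$ infer $\neg\neg p$; (Inv2) from $\neg\neg p$ infer $p$; (Flat) from $p$ and $\neg 1$ infer $\neg p$; (R2$'$) from $p\to q$ and $r\to t$ infer $(q\to r)\to(p\to t)$; (R3$'$) from $(r\to r)\to p$ infer $p^-$. $q_1,\dots,q_n\vdash_{\mathrm{sq}\L^*}q$ means there is a finite sequence ending with $q$ whose members are axiom instances, among $q_1,\dots,q_n$, or follow from earlier members by rules. Semantics: a quasi-Wajsberg* algebra is an algebra $\langle W;\to,\neg,{}^+,{}^-,1\rangle$ of type $\langle 2,1,1,1,0\rangle$ such that for all $x,y,z$: $x\to y=\neg y\to\neg x$; $(x\to 1)\to((y\to 1)\to z)=(y\to 1)\to((x\to 1)\to z)$; $(1\to x)\to 1=1$; $(z\to z)\to(x\to y)=x\to y$; $(1\to 1)\to x^{+}=((1\to 1)\to x)^{+}=(x\to 1)\to 1$ and $(1\to 1)\to x^{-}=((1\to 1)\to x)^{-}=(x\to\neg 1)\to\neg 1$; $x\to y=(y^{+}\to x^{-})\to(x^{+}\to y^{-})$; $\neg(x\to y)=y\to x$; $\neg\neg x=x$; $(x\to(\neg x\to y))^{+}=x^{+}\to(\neg x^{+}\to y^{+})$; $x\vee y=y\vee x$; $x\vee(y\vee z)=(x\vee y)\vee z$;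 $x\to(y\vee z)=(x\to y)\vee(x\to z)$, with $x\vee y:=((x^{+}\to y^{+})^{+}\to(\neg x)^{-})\to((y^{-}\to x^{-})^{-}\to x^{-})$. A strong quasi-Wajsberg* algebra additionally satisfies $x^+=(1\to 1)\to x^+$ and $x^-=(1\to 1)\to x^-$; $\mathbb{SQW^*}$ is the class of these. An element $d$ of such an algebra $\mathbf{A}$ is designated if $d=(c\to 1)\to 1$ for some $c\in A$. $q_1,\dots,q_n\vDash_{\mathbb{SQW^*}}q$ means: for every $\mathbf{A}\in\mathbb{SQW^*}$ and every assignment of the variables in $A$, if the values of $q_1,\dots,q_n$ are all designated then the value of $q$ is designated. *)

From Stdlib Require Import List.
Import ListNotations.
Set Implicit Arguments.

Inductive form (V : Type) : Type :=
| FVar : V -> form V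
| FOne : form V
| FImp : form V -> form V -> form V
| FNeg : form V -> form V.
Arguments FOne {V}.

Section Syntax.
Variable V : Type.
Local Notation "p --> q" := (FImp p q) (at level 55, right associativity).

Definition fplus (p : form V) : form V := (p --> FOne) --> FOne.
Definition fminus (p : form V) : form V := (p --> FNeg FOne) --> FNeg FOne.
Definition fjoin (p q : form V) : form V :=
  (fplus (fplus p --> fplus q) --> fminus (FNeg p)) -->
  (fminus (fminus q --> fminus p) --> fminus p).

(* an axiom "p <-> q" stands for the two axioms p -> q and q -> p *)
Definition biax (p q : form V) (c : form V) : Prop := c = (p --> q) \/ c = (q --> p).

Definition sqL_axiom (c : form V) : Prop :=
  exists p q r : form V,
     biax (p --> q) (FNeg q --> FNeg p) c
  \/ biax FOne ((FOne --> p) --> FOne) c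
  \/ biax p ((q --> q) --> p) c
  \/ biax (p --> q) ((fplus q --> fminus p) --> (fplus p --> fminus q)) c
  \/ biax (FNeg (p --> q)) (q --> p) c
  \/ biax (fplus (p --> (FNeg p --> q)))
          (fplus p --> (FNeg (fplus p) --> fplus q)) c
  \/ biax (p --> fjoin q r) (fjoin (p --> r) (p --> q)) c
  \/ biax (fjoin p (fjoin q r)) (fjoin (fjoin p q) r) c
  \/ c = (((p --> FOne) --> ((q --> FOne) --> r)) -->
          ((q --> FOne) --> ((p --> FOne) --> r)))
  \/ c = (p --> FOne).

Inductive sqL_rule : list (form V) -> form V -> Prop :=
| R_qMP : forall p q r,
    sqL_rule [(r --> r) --> p; (r --> r) --> (p --> q)] ((r --> r) --> q)
| R_Reg : forall p r, sqL_rule [p] ((r --> r) --> p)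
| R_AReg1 : forall p q r, sqL_rule [(r --> r) --> (p --> q)] (p --> q)
| R_AReg2 : forall p q r,
    sqL_rule [(r --> r) --> FNeg (p --> q)] (FNeg (p --> q))
| R_AReg3 : forall r, sqL_rule [(r --> r) --> FNeg FOne] (FNeg FOne)
| R_AReg4 : forall r, sqL_rule [(r --> r) --> FOne] FOne
| R_Inv1 : forall p, sqL_rule [p] (FNeg (FNeg p))
| R_Inv2 : forall p, sqL_rule [FNeg (FNeg p)] p
| R_Flat : forall p, sqL_rule [p; FNeg FOne] (FNeg p)
| R_R2' : forall p q r t,
    sqL_rule [p --> q; r --> t] ((q --> r) --> (p --> t))
| R_R3' : forall p r, sqL_rule [(r --> r) --> p] (fminus p).

Definition justified (hyps prev : list (form V)) (c : form V) : Prop :=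
  sqL_axiom c \/ In c hyps \/
  exists ps, sqL_rule ps c /\ (forall x, In x ps -> In x prev).

Definition sqL_derivation (hyps l : list (form V)) : Prop :=
  forall i d, i < length l -> justified hyps (firstn i l) (nth i l d).

Definition sqL_derives (hyps : list (form V)) (q : form V) : Prop :=
  exists l, l <> [] /\ sqL_derivation hyps l /\ last l q = q.
End Syntax.

Record SQWalg : Type := {
  car :> Type;
  aimp : car -> car -> car;
  aneg : car -> car;
  aplus : car -> car;
  aminus : car -> car;
  aone : car;
}.

Section Alg.
Variable A : SQWalg.
Local Notation "x --> y" := (aimp A x y) (at level 55, right associativity).
Local Notation "1" := (aone A).
Local Notation "'N' x" := (aneg A x) (at level 35, right associativity).
Local Notation "x ^+" := (aplus A x) (at level 2, format "x ^+").
Local Notation "x ^-" := (aminus A x) (at level 2, format "x ^-").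

Definition ajoin (x y : A) : A :=
  ((x^+ --> y^+)^+ --> (N x)^-) --> ((y^- --> x^-)^- --> x^-).

Definition is_qWstar : Prop :=
  (forall x y : A, (x --> y) = (N y --> N x)) /\
  (forall x y z : A, ((x --> 1) --> ((y --> 1) --> z)) = ((y --> 1) --> ((x --> 1) --> z))) /\
  (forall x : A, ((1 --> x) --> 1) = 1) /\
  (forall x y z : A, ((z --> z) --> (x --> y)) = (x --> y)) /\
  (forall x : A, ((1 --> 1) --> x^+) = ((1 --> 1) --> x)^+ /\
                 ((1 --> 1) --> x)^+ = ((x --> 1) --> 1)) /\
  (forall x : A, ((1 --> 1) --> x^-) = ((1 --> 1) --> x)^- /\
                 ((1 --> 1) --> x)^- = ((x --> N 1) --> N 1)) /\
  (forall x y : A, (x --> y) = ((y^+ --> x^-) --> (x^+ --> y^-))) /\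
  (forall x y : A, N (x --> y) = (y --> x)) /\
  (forall x : A, N N x = x) /\
  (forall x y : A, (x --> (N x --> y))^+ = (x^+ --> (N (x^+) --> y^+))) /\
  (forall x y : A, ajoin x y = ajoin y x) /\
  (forall x y z : A, ajoin x (ajoin y z) = ajoin (ajoin x y) z) /\
  (forall x y z : A, (x --> ajoin y z) = ajoin (x --> y) (x --> z)).

Definition is_SQWstar : Prop :=
  is_qWstar /\
  (forall x : A, x^+ = ((1 --> 1) --> x^+)) /\
  (forall x : A, x^- = ((1 --> 1) --> x^-)).

Definition designated (d : A) : Prop := exists c : A, d = ((c --> 1) --> 1).

Fixpoint eval (V : Type) (e : V -> A) (p : form V) : A :=
  match p with
  | FVar v => e v
  | FOne => 1
  | FImp p q => eval e p --> eval e q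
  | FNeg p => N eval e p
  end.
End Alg.

Definition SQW_entails (V : Type) (hyps : list (form V)) (q : form V) : Prop :=
  forall (A : SQWalg), is_SQWstar A ->
  forall e : V -> A,
    (forall h, In h hyps -> designated A (eval A e h)) ->
    designated A (eval A e q).

(* Designated elements are exactly the fixed points of [x |-> x^+], because
   [x^++ = x^+].  For an implication, [x --> y] is designated iff
   [x v y = (1 --> 1) --> y]; this relation is transitive, antitone in the
   antecedent and monotone in the consequent of [-->], which gives soundness of
   qMP and R2'.  The remaining rules and all axioms reduce to the algebra's
   identities (most axioms evaluate to some [a --> a = 1 --> 1]), and induction
   along the derivation concludes. *)

From Stdlib Require Import List Arith Lia.
Import ListNotations.

Lemma In_prefix_ind {T : Type} (Q : T -> Prop) (l : list T) (d : T) :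
  (forall i, i < length l -> (forall x, In x (firstn i l) -> Q x) -> Q (nth i l d)) ->
  forall x, In x l -> Q x.
Proof.
  intros Hl.
  assert (Hnth : forall i, i < length l -> Q (nth i l d)).
  { intros i. induction i as [i IH] using (well_founded_induction lt_wf).
    intros Hi. apply (Hl i Hi). intros x Hx.
    destruct (In_nth _ _ d Hx) as (n & Hn & <-).
    rewrite length_firstn in Hn. rewrite nth_firstn.
    replace (n <? i) with true by (symmetry; apply Nat.ltb_lt; lia).
    apply IH; lia. }
  intros x Hx. destruct (In_nth _ _ d Hx) as (i & Hi & <-). apply Hnth, Hi.
Qed.

Lemma last_In {T : Type} (l : list T) (d : T) : l <> [] -> In (last l d) l.
Proof.
  intros Hne. rewrite (app_removelast_last d Hne) at 2.
  apply in_or_app. right. left. reflexivity.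
Qed.

Section SQWstar.
Variable A : SQWalg.
Hypothesis HA : is_SQWstar A.

Local Notation "x --> y" := (aimp A x y) (at level 55, right associativity).
Local Notation N := (aneg A).
Local Notation "1" := (aone A).
Local Notation e := (1 --> 1).
Local Notation P x := ((x --> 1) --> 1).
Local Notation M x := ((x --> N 1) --> N 1).
Local Notation J := (ajoin A).

Lemma imp_contra x y : x --> y = N y --> N x.
Proof. destruct HA as [[H _] _]. apply H. Qed.

Lemma one_imp_exch x y z : (x --> 1) --> (y --> 1) --> z = (y --> 1) --> (x --> 1) --> z.
Proof. destruct HA as [[_ [H _]] _]. apply H. Qed.

Lemma one_imp_imp_one x : (1 --> x) --> 1 = 1.
Proof. destruct HA as [[_ [_ [H _]]] _]. apply H. Qed.

Lemma refl_imp_imp x y z : (z --> z) --> (x --> y) = x --> y.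
Proof. destruct HA as [[_ [_ [_ [H _]]]] _]. apply H. Qed.

Lemma plus_def x : aplus A x = P x.
Proof.
  destruct HA as [[_ [_ [_ [_ [H _]]]]] [Hreg _]].
  rewrite Hreg. destruct (H x) as [-> ->]. reflexivity.
Qed.

Lemma minus_def x : aminus A x = M x.
Proof.
  destruct HA as [[_ [_ [_ [_ [_ [H _]]]]]] [_ Hreg]].
  rewrite Hreg. destruct (H x) as [-> ->]. reflexivity.
Qed.

Lemma e_imp_plus x : e --> P x = P x.
Proof. destruct HA as [_ [Hreg _]]. rewrite <- plus_def. symmetry. apply Hreg. Qed.

Lemma plus_e_imp x : P (e --> x) = P x.
Proof.
  destruct HA as [[_ [_ [_ [_ [H _]]]]] _].
  rewrite <- plus_def. apply (H x).
Qed.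

Lemma e_imp_minus x : e --> M x = M x.
Proof. destruct HA as [_ [_ Hreg]]. rewrite <- minus_def. symmetry. apply Hreg. Qed.

Lemma minus_e_imp x : M (e --> x) = M x.
Proof.
  destruct HA as [[_ [_ [_ [_ [_ [H _]]]]]] _].
  rewrite <- minus_def. apply (H x).
Qed.

Lemma imp_plus_minus x y : x --> y = (P y --> M x) --> (P x --> M y).
Proof.
  destruct HA as [[_ [_ [_ [_ [_ [_ [H _]]]]]]] _].
  rewrite <- !plus_def, <- !minus_def. apply H.
Qed.

Lemma neg_imp x y : N (x --> y) = y --> x.
Proof. destruct HA as [[_ [_ [_ [_ [_ [_ [_ [H _]]]]]]]] _]. apply H. Qed.

Lemma neg_neg x : N (N x) = x.
Proof. destruct HA as [[_ [_ [_ [_ [_ [_ [_ [_ [H _]]]]]]]]] _]. apply H. Qed.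

Lemma plus_imp_neg_imp x y : P (x --> N x --> y) = P x --> N (P x) --> P y.
Proof.
  destruct HA as [[_ [_ [_ [_ [_ [_ [_ [_ [_ [H _]]]]]]]]]] _].
  rewrite <- !plus_def. apply H.
Qed.

Lemma join_comm x y : J x y = J y x.
Proof. destruct HA as [[_ [_ [_ [_ [_ [_ [_ [_ [_ [_ [H _]]]]]]]]]]] _]. apply H. Qed.

Lemma join_assoc x y z : J x (J y z) = J (J x y) z.
Proof. destruct HA as [[_ [_ [_ [_ [_ [_ [_ [_ [_ [_ [_ [H _]]]]]]]]]]]] _]. apply H. Qed.

Lemma imp_join x y z : x --> J y z = J (x --> y) (x --> z).
Proof. destruct HA as [[_ [_ [_ [_ [_ [_ [_ [_ [_ [_ [_ [_ H]]]]]]]]]]]] _]. apply H. Qed.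

Lemma joinE x y :
  J x y = (P (P x --> P y) --> M (N x)) --> (M (M y --> M x) --> M x).
Proof. unfold ajoin. rewrite !plus_def, !minus_def. reflexivity. Qed.

Lemma neg_e : N e = e.
Proof. apply neg_imp. Qed.

Lemma imp_refl x : x --> x = e.
Proof.
  rewrite <- (refl_imp_imp x x 1), <- neg_imp, refl_imp_imp. apply neg_e.
Qed.

Lemma plus_one : P 1 = 1.
Proof. apply one_imp_imp_one. Qed.

Lemma neg_one : N 1 = 1 --> e.
Proof. rewrite <- plus_one at 1. apply neg_imp. Qed.

Lemma imp_neg_swap x y : x --> N y = y --> N x.
Proof. rewrite imp_contra, neg_neg. reflexivity. Qed.

Lemma neg_imp_swap x y : N x --> y = N y --> x.
Proof. rewrite imp_contra, neg_neg. reflexivity. Qed.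

Lemma one_imp_neg_one_imp x : 1 --> N 1 --> x = M x.
Proof. rewrite (imp_neg_swap _ 1), neg_imp. reflexivity. Qed.

Lemma one_imp_minus x : 1 --> M x = N 1.
Proof.
  rewrite <- one_imp_neg_one_imp, <- neg_imp. f_equal. apply one_imp_imp_one.
Qed.

Lemma minus_one : M 1 = e.
Proof. rewrite <- one_imp_neg_one_imp, neg_one, one_imp_imp_one. reflexivity. Qed.

Lemma neg_plus x : N (P x) = P x --> e.
Proof. rewrite <- (e_imp_plus x) at 1. apply neg_imp. Qed.

Lemma neg_minus x : N (M x) = M x --> e.
Proof. rewrite <- (e_imp_minus x) at 1. apply neg_imp. Qed.

Lemma plus_imp_one x : P x --> 1 = x --> 1.
Proof.
  rewrite imp_contra, neg_plus, <- minus_one, <- (one_imp_minus x), <- plus_one at 1.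
  symmetry. apply imp_plus_minus.
Qed.

Lemma plus_plus x : P (P x) = P x.
Proof. rewrite plus_imp_one. reflexivity. Qed.

Lemma minus_plus x : M (P x) = e.
Proof.
  rewrite <- one_imp_neg_one_imp, neg_imp_swap, neg_imp, one_imp_imp_one.
  reflexivity.
Qed.

Lemma minus_neg x : M (N x) = N (P x).
Proof. rewrite neg_imp, <- one_imp_neg_one_imp, <- imp_contra. reflexivity. Qed.

Lemma plus_neg x : P (N x) = N (M x).
Proof. rewrite <- (neg_neg x) at 2. rewrite minus_neg, neg_neg. reflexivity. Qed.

Lemma minus_e : M e = e.
Proof.
  transitivity (M (N (M 1))).
  - rewrite minus_one, neg_e. reflexivity.
  - rewrite <- plus_neg. apply minus_plus.
Qed.

Lemma plus_e : P e = e.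
Proof. rewrite <- neg_e at 1. rewrite plus_neg, minus_e. apply neg_e. Qed.

Lemma neg_imp_e x : N x --> e = e --> x.
Proof. rewrite <- neg_e at 1. rewrite <- imp_contra. reflexivity. Qed.

Lemma imp_e x : x --> e = e --> N x.
Proof. rewrite <- (neg_neg x) at 1. apply neg_imp_e. Qed.

Lemma join_e_l x : J e x = P x.
Proof.
  rewrite joinE, plus_e, e_imp_plus, plus_plus, neg_e, minus_e, <- neg_plus,
    <- (neg_minus x), <- plus_neg, minus_plus, imp_refl, neg_imp_e.
  apply e_imp_plus.
Qed.

Lemma imp_reg x y : (e --> x) --> (e --> y) = x --> y.
Proof.
  rewrite (imp_plus_minus (e --> x)), !plus_e_imp, !minus_e_imp.
  symmetry. apply imp_plus_minus.
Qed.

Lemma imp_e_imp_r x y : x --> (e --> y) = x --> y.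
Proof. rewrite <- (imp_reg x (e --> y)), refl_imp_imp. apply imp_reg. Qed.

Lemma imp_e_imp_l x y : (e --> x) --> y = x --> y.
Proof. rewrite <- (imp_reg (e --> x) y), refl_imp_imp. apply imp_reg. Qed.

Lemma join_e_imp_r x y : J x (e --> y) = J x y.
Proof. rewrite !joinE, !plus_e_imp, !minus_e_imp. reflexivity. Qed.

Lemma join_e_imp_l x y : J (e --> x) y = J x y.
Proof.
  rewrite !joinE, !plus_e_imp, !minus_e_imp, neg_imp, imp_e, minus_e_imp.
  reflexivity.
Qed.

Lemma e_imp_decomp x : e --> x = N (P x) --> M x.
Proof.
  rewrite (imp_plus_minus e x), minus_e, plus_e, <- neg_plus, e_imp_minus.
  reflexivity.
Qed.

Lemma plus_eq_of_minus_e x : M x = e -> P x = e --> x.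
Proof.
  intros Hx. rewrite e_imp_decomp, Hx, neg_imp_e, e_imp_plus. reflexivity.
Qed.

Lemma minus_eq_of_plus_e x : P x = e -> M x = e --> x.
Proof.
  intros Hx. rewrite e_imp_decomp, Hx, neg_e, e_imp_minus. reflexivity.
Qed.

Lemma plus_imp_plus_imp_neg x y : (P x --> P y) --> N (P x) = N (P y).
Proof.
  rewrite (imp_contra _ (N (P x))), neg_neg, neg_imp,
    (one_imp_exch (x --> 1) (y --> 1)), imp_refl.
  symmetry. apply neg_plus.
Qed.

Lemma minus_imp_minus_imp x y : (M x --> M y) --> M y = M x.
Proof.
  rewrite <- (neg_neg x), <- (neg_neg y), !minus_neg, <- imp_contra.
  apply plus_imp_plus_imp_neg.
Qed.

Lemma join_imp x y z : J x y --> z = N (J (z --> x) (z --> y)).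
Proof. rewrite <- imp_join. symmetry. apply neg_imp. Qed.

Lemma plus_plus_imp_plus x y : P (P x --> P y) = P (P x --> y).
Proof.
  rewrite <- (join_e_l y), imp_join, <- neg_plus, <- (join_e_l (J _ _)),
    join_assoc, join_e_l, plus_neg, minus_plus, neg_e, join_e_l.
  reflexivity.
Qed.

Lemma minus_join_e x y : M y = e -> M (J x y) = e.
Proof.
  intros Hy.
  rewrite <- join_e_imp_r, <- (plus_eq_of_minus_e _ Hy), <- (join_e_l y),
    join_assoc, (join_comm x e), <- join_assoc, join_e_l.
  apply minus_plus.
Qed.

Lemma plus_plus_imp_plus_e x y : M (x --> y) = e -> P (P y --> P x) = e.
Proof.
  intros Hxy.
  rewrite plus_plus_imp_plus, <- (join_e_l y), join_imp, plus_neg,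
    (minus_join_e _ _ Hxy).
  apply neg_e.
Qed.

Lemma minus_as_plus x : M x = N (P (N x)).
Proof. rewrite plus_neg, neg_neg. reflexivity. Qed.

(* [x] lies below [y]; the right-hand side is [e --> y] rather than [y]
   because joins only see [y] through [P y] and [M y]. *)
Definition join_le (x y : A) : Prop := J x y = e --> y.

Lemma join_le_of_plus_imp x y : P (x --> y) = x --> y -> join_le x y.
Proof.
  intros Hxy.
  assert (Hm : M (x --> y) = e) by (rewrite <- Hxy; apply minus_plus).
  assert (Hp : P (P x --> P y) = P x --> P y).
  { rewrite plus_eq_of_minus_e, refl_imp_imp; [reflexivity|].
    rewrite <- (neg_imp (P y)), minus_neg, (plus_plus_imp_plus_e _ _ Hm). apply neg_e. }
  assert (Hn : M (M y --> M x) = M y --> M x).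
  { rewrite minus_eq_of_plus_e, refl_imp_imp; [reflexivity|].
    rewrite !minus_as_plus, <- imp_contra.
    apply plus_plus_imp_plus_e. rewrite <- imp_contra. exact Hm. }
  unfold join_le.
  rewrite joinE, Hp, Hn, minus_neg, plus_imp_plus_imp_neg, minus_imp_minus_imp.
  symmetry. apply e_imp_decomp.
Qed.

Lemma plus_imp_of_join_le x y : join_le x y -> P (x --> y) = x --> y.
Proof.
  intros Hxy.
  rewrite <- join_e_l, <- (imp_refl x), <- imp_join, Hxy. apply imp_e_imp_r.
Qed.

Lemma join_le_trans x y z : join_le x y -> join_le y z -> join_le x z.
Proof.
  unfold join_le. intros Hxy Hyz.
  rewrite <- join_e_imp_r, <- Hyz, join_assoc, Hxy, join_e_imp_l. reflexivity.
Qed.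

Lemma join_le_imp_r x y z : join_le x y -> join_le (z --> x) (z --> y).
Proof.
  unfold join_le. intros Hxy.
  rewrite <- imp_join, Hxy, imp_e_imp_r, refl_imp_imp. reflexivity.
Qed.

Lemma join_le_imp_l x y z : join_le x y -> join_le (y --> z) (x --> z).
Proof.
  intros Hxy.
  apply join_le_of_plus_imp. rewrite (imp_contra y), (imp_contra x).
  apply plus_imp_of_join_le, join_le_imp_r, join_le_of_plus_imp.
  rewrite <- !imp_contra. apply plus_imp_of_join_le, Hxy.
Qed.

Lemma designatedE x : designated A x <-> P x = x.
Proof.
  split.
  - intros [c ->]. apply plus_plus.
  - intros Hx. exists x. symmetry. exact Hx.
Qed.

Lemma designated_imp x y : designated A (x --> y) <-> join_le x y.
Proof.
  rewrite designatedE. split; [apply join_le_of_plus_imp | apply plus_imp_of_join_le].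
Qed.

Lemma designated_e : designated A e.
Proof. apply designatedE, plus_e. Qed.

Lemma designated_imp_refl x : designated A (x --> x).
Proof. rewrite imp_refl. apply designated_e. Qed.

Lemma designated_imp_one x : designated A (x --> 1).
Proof. apply designatedE, plus_imp_one. Qed.

Lemma designated_e_imp x : designated A x -> designated A (e --> x).
Proof. rewrite !designatedE. intros Hx. rewrite <- Hx, e_imp_plus. apply plus_plus. Qed.

Lemma designated_qMP x y :
  designated A (e --> x) -> designated A (x --> y) -> designated A (e --> y).
Proof. rewrite !designated_imp. apply join_le_trans. Qed.

Lemma designated_imp_mono x y z t : designated A (x --> y) ->
  designated A (z --> t) -> designated A ((y --> z) --> (x --> t)).
Proof.
  rewrite !designated_imp. intros Hxy Hzt.
  apply (join_le_trans _ (x --> z)).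
  - apply join_le_imp_l, Hxy.
  - apply join_le_imp_r, Hzt.
Qed.

Lemma designated_minus x : designated A (e --> x) -> designated A (M x).
Proof.
  rewrite !designatedE. intros Hx.
  rewrite <- minus_e_imp, <- Hx, minus_plus. apply plus_e.
Qed.

(* A designated [N 1] forces [1 = 1 --> 1], and then every designated element
   equals [1 --> 1]. *)
Lemma designated_neg_of_neg_one x :
  designated A x -> designated A (N 1) -> designated A (N x).
Proof.
  rewrite !designatedE. intros Hx Hneg1.
  assert (Hm : N 1 = e).
  { rewrite <- plus_one at 1. rewrite <- minus_neg, <- (minus_plus (N 1)), Hneg1.
    reflexivity. }
  assert (Hone : 1 = e) by (rewrite <- (neg_neg 1) at 1; rewrite Hm; apply neg_e).
  assert (Hxe : x = e).
  { rewrite <- Hx, <- plus_e_imp, <- Hone, one_imp_imp_one. symmetry. exact Hone. }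
  rewrite Hxe, neg_e. apply plus_e.
Qed.

Lemma eval_join (V : Type) (ev : V -> A) (p q : form V) :
  eval A ev (fjoin p q) = J (eval A ev p) (eval A ev q).
Proof. symmetry. apply joinE. Qed.

Lemma designated_biax (V : Type) (ev : V -> A) (p q c : form V) :
  biax p q c -> eval A ev p = eval A ev q -> designated A (eval A ev c).
Proof. intros [-> | ->] Hpq; cbn [eval]; rewrite Hpq; apply designated_imp_refl. Qed.

Lemma sqL_axiom_designated (V : Type) (ev : V -> A) (c : form V) :
  sqL_axiom c -> designated A (eval A ev c).
Proof.
  intros (p & q & r & [H|[H|[H|[H|[H|[H|[H|[H|[-> | ->]]]]]]]]]).
  - apply (designated_biax _ ev _ _ _ H), imp_contra.
  - apply (designated_biax _ ev _ _ _ H). symmetry. apply one_imp_imp_one.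
  - destruct H as [-> | ->]; cbn [eval]; rewrite imp_refl.
    + rewrite imp_e_imp_r. apply designated_imp_refl.
    + rewrite imp_e_imp_l. apply designated_imp_refl.
  - apply (designated_biax _ ev _ _ _ H), imp_plus_minus.
  - apply (designated_biax _ ev _ _ _ H), neg_imp.
  - apply (designated_biax _ ev _ _ _ H), plus_imp_neg_imp.
  - apply (designated_biax _ ev _ _ _ H). cbn [eval].
    rewrite !eval_join. cbn [eval]. rewrite imp_join. apply join_comm.
  - apply (designated_biax _ ev _ _ _ H). rewrite !eval_join. apply join_assoc.
  - cbn [eval]. rewrite one_imp_exch. apply designated_imp_refl.
  - apply designated_imp_one.
Qed.

Lemma sqL_rule_designated (V : Type) (ev : V -> A) (ps : list (form V)) (c : form V) :
  sqL_rule ps c -> (forall x, In x ps -> designated A (eval A ev x)) ->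
  designated A (eval A ev c).
Proof.
  intros Hr Hps.
  destruct Hr; assert (H1 := Hps _ (in_eq _ _)); cbn [eval] in H1 |- *.
  - assert (H2 := Hps _ (in_cons _ _ _ (in_eq _ _))). cbn [eval] in H2.
    rewrite !imp_refl in H1, H2 |- *. rewrite refl_imp_imp in H2.
    exact (designated_qMP _ _ H1 H2).
  - rewrite imp_refl. apply designated_e_imp, H1.
  - rewrite refl_imp_imp in H1. exact H1.
  - rewrite neg_imp in H1 |- *. rewrite refl_imp_imp in H1. exact H1.
  - rewrite neg_one in H1 |- *. rewrite refl_imp_imp in H1. exact H1.
  - rewrite imp_refl, one_imp_imp_one in H1. exact H1.
  - rewrite neg_neg. exact H1.
  - rewrite neg_neg in H1. exact H1.
  - assert (H2 := Hps _ (in_cons _ _ _ (in_eq _ _))). cbn [eval] in H2.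
    exact (designated_neg_of_neg_one _ H1 H2).
  - assert (H2 := Hps _ (in_cons _ _ _ (in_eq _ _))). cbn [eval] in H2.
    exact (designated_imp_mono _ _ _ _ H1 H2).
  - rewrite imp_refl in H1. exact (designated_minus _ H1).
Qed.

Lemma sqL_derivation_designated (V : Type) (ev : V -> A) (hyps l : list (form V)) :
  sqL_derivation hyps l ->
  (forall h, In h hyps -> designated A (eval A ev h)) ->
  forall c, In c l -> designated A (eval A ev c).
Proof.
  intros Hl Hhyps. apply (In_prefix_ind _ l FOne).
  intros i Hi Hprev.
  destruct (Hl i FOne Hi) as [Hax | [Hhyp | (ps & Hr & Hps)]].
  - apply sqL_axiom_designated, Hax.
  - apply Hhyps, Hhyp.
  - apply (sqL_rule_designated _ _ _ _ Hr). intros x Hx. apply Hprev, Hps, Hx.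
Qed.

End SQWstar.

Theorem theorem4p2 (V : Type) (hyps : list (form V)) (q : form V) :
  sqL_derives hyps q -> SQW_entails hyps q.
Proof.
  intros (l & Hne & Hl & Hlast) A HA ev Hhyps.
  rewrite <- Hlast.
  apply (sqL_derivation_designated A HA V ev hyps l Hl Hhyps), last_In, Hne.
Qed.
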